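(* For any odd prime $p$ and any positive integer $r$, $$p^{3r}\sum_{k=0}^{(p^r-3)/2}\frac{16^k}{(2k+1)^3\binom{2k}{k}^2}\equiv p^{3}\sum_{k=0}^{(p-3)/2}\frac{16^k}{(2k+1)^3\binom{2k}{k}^2}\pmod{p^4}.$$
   Context: A congruence $a\equiv b\pmod{p^m}$ between rational numbers means that $(a-b)/p^m$ is a rational number whose denominator is not divisible by $p$. *)

From mathcomp Require Import all_boot all_order all_algebra.
Set Implicit Arguments. Unset Strict Implicit. Unset Printing Implicit Defensive.
Import Order.TTheory GRing.Theory Num.Theory.
Local Open Scope ring_scope.

(* a = b (mod p^m) for rationals: (a - b)/p^m has denominator not divisible by p.
   Note rat is stored in lowest terms with positive denominator (denq). *)
Definition rat_congr (p m : nat) (a b : rat) : Prop :=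
  ~~ (p %| `|denq ((a - b) / (p ^ m)%:R)|%N)%N.

Definition term (k : nat) : rat :=
  (16 ^ k)%:R / (((2 * k + 1) ^ 3)%:R * ('C(2 * k, k) ^ 2)%:R).

(* Sum over k = 0 .. (n-3)/2, i.e. k < (n-1)/2, for odd n >= 3. *)
Definition S (n : nat) : rat := \sum_(k < (n - 1) %/ 2) term k.

From mathcomp Require Import all_boot all_order all_algebra finfield.
From mathcomp Require Import zify ring.
Import Order.TTheory GRing.Theory Num.Theory.

(* Let S(n) = sum_(k < (n-1)/2) 16^k / ((2k+1)^3 C(2k,k)^2) and r = s + 2
   (r = 1 is trivial).  Put q = p^(s+1), so that S(p^r) runs over
   k < q J + (q-1)/2 with J = (p-1)/2.  Dividing the claimed congruence by p^4,
   we must show that  sum_k p^(3s+2) term k - sum_(j<J) term j / p  is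
   p-integral.  Split the first sum according to whether q divides 2k+1:
   - if not, Legendre's formula bounds v_p((2k+1)^3 C(2k,k)^2) by 3s+2, so
     p^(3s+2) term k is p-integral on its own;
   - if so, k = q j + (q-1)/2 with j < J, and p^(3s+2) term k is paired with
     term j / p; both have the form 16^. / (p (2j+1)^3 C^2), and by Lucas'
     theorem 16^k / C(2k,k)^2 = 16^j / C(2j,j)^2 in F_p, so the difference
     is p-integral. *)

Set Implicit Arguments. Unset Strict Implicit. Unset Printing Implicit Defensive.

Lemma half_pred_mul (a b : nat) : odd a -> odd b ->
  ((a * b - 1) %/ 2 = b * ((a - 1) %/ 2) + (b - 1) %/ 2)%N.
Proof.
move=> oa ob; have := odd_double_half a; have := odd_double_half b.
rewrite oa ob -!muln2 => eb ea; rewrite -ea -eb; move: (a./2) (b./2) => A B.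
have -> : ((1 + A * 2) * (1 + B * 2) - 1 = 2 * ((1 + B * 2) * A + B))%N by nia.
have -> : (1 + A * 2 - 1 = 2 * A)%N by lia.
have -> : (1 + B * 2 - 1 = 2 * B)%N by lia.
by rewrite !mulKn.
Qed.

Lemma dvdn_odd_mid (q k : nat) :
  odd q -> (q %| 2 * k + 1) = (k %% q == (q - 1) %/ 2).
Proof.
move=> oq; have q0 : (0 < q)%N by case: (q) oq.
have := odd_double_half q; rewrite oq -muln2 => eq.
have -> : ((q - 1) %/ 2 = q./2)%N by rewrite -{1}eq addKn mulnK.
rewrite {1}(divn_eq k q) mulnDr mulnA -addnA dvdn_addr ?dvdn_mull //.
have := ltn_pmod k q0; move: (k %% q) => t tq.
apply/idP/eqP => [/dvdnP[[|[|c]] ec] | ->]; try lia.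
by rewrite -{1}eq mulnC addnC.
Qed.

Section Valuation.
Variable p : nat.
Hypothesis p_pr : prime p.

Lemma sum_div_pow_stable (n N1 N2 : nat) : n < p ^ N1 -> N1 <= N2 ->
  \sum_(1 <= i < N1) n %/ p ^ i = \sum_(1 <= i < N2) n %/ p ^ i.
Proof.
case: N1 => [|N1] nN1 le12.
  by rewrite !big1 // => i _; rewrite (_ : n = 0) ?div0n //; lia.
rewrite [RHS](big_cat_nat (n := N1.+1)) //= [X in _ + X]big1_seq ?addn0 //.
move=> i /andP[_]; rewrite mem_index_iota => /andP[Ni _]; apply: divn_small.
by apply: leq_trans nN1 _; rewrite leq_pexp2l ?prime_gt0.
Qed.

(* Legendre's formula, with the sum cut at any M such that n < p ^ M (the
   library version logn_fact runs up to n). *)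
Lemma legendre (n M : nat) : n < p ^ M ->
  logn p n`! = \sum_(1 <= i < M) n %/ p ^ i.
Proof.
move=> nM; have np : n < p ^ n.+1 by apply/ltnW/ltn_expl/prime_gt1.
rewrite logn_fact // (@sum_div_pow_stable _ _ (n.+1 + M) np (leq_addr M _)).
by rewrite (@sum_div_pow_stable _ _ (n.+1 + M) nM (leq_addl _ _)).
Qed.

(* Since (2k+1)! = (2k+1) * C(2k,k) * k!^2 and each term of Legendre's sum for
   2k+1 exceeds twice the one for k by at most 1, the p-adic valuations of
   2k+1 and C(2k,k) add up to less than R whenever 2k+1 < p^R. *)
Lemma logn_odd_central_binomial (k R : nat) : 2 * k + 1 < p ^ R ->
  logn p (2 * k + 1) + logn p 'C(2 * k, k) <= R.-1.
Proof.
move=> kR.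
have eF : (2 * k + 1)`! = (2 * k + 1) * ('C(2 * k, k) * (k`! * k`!)).
  have := @bin_fact (2 * k) k; rewrite (_ : 2 * k - k = k); last by lia.
  by move=> ->; [rewrite addn1 factS | lia].
have C0 : 0 < 'C(2 * k, k) by rewrite bin_gt0; lia.
have := legendre kR; rewrite eF !lognM ?muln_gt0 ?fact_gt0 ?C0 ?addn1 //.
rewrite -addn1 (@legendre k R); last by lia.
have termwise : \sum_(1 <= i < R) (2 * k + 1) %/ p ^ i <=
                \sum_(1 <= i < R) (k %/ p ^ i + k %/ p ^ i + 1).
  apply: leq_sum => i _.
  have d0 : 0 < p ^ i by rewrite expn_gt0 prime_gt0.
  rewrite -ltnS ltn_divLR //.
  have := divn_eq k (p ^ i); have := ltn_pmod k d0; nia.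
move: termwise; rewrite !big_split /= sum_nat_const_nat muln1; lia.
Qed.

Lemma ndvdn_logn0 (x : nat) : 0 < x -> logn p x = 0 -> ~~ (p %| x).
Proof. by move=> x0 l0; rewrite -[p in p %| _]expn1 pfactor_dvdn // l0. Qed.

End Valuation.

Local Open Scope ring_scope.

Section Integrality.
Variable p : nat.
Hypothesis p_pr : prime p.

Definition p_integral (x : rat) : bool := ~~ (p %| `|denq x|)%N.

Lemma rat_congrE (m : nat) (a b : rat) :
  rat_congr p m a b = p_integral ((a - b) / (p ^ m)%:R).
Proof. by []. Qed.

(* A fraction a / b, not necessarily reduced, is p-integral when p does not
   divide b: its reduced denominator divides b. *)
Lemma p_integral_frac (a b : int) :
  ~~ (p %| `|b|)%N -> p_integral (a%:~R / b%:~R).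
Proof.
move=> pb; have b0 : b != 0 by apply: contraNneq pb => ->; rewrite dvdn0.
set x := a%:~R / b%:~R.
have cross : numq x * b = a * denq x.
  apply: (@intr_inj rat); rewrite !rmorphM /= numqE /x.
  by field; rewrite intr_eq0.
apply: contra pb => pd.
have : (`|denq x| %| `|numq x| * `|b|)%N by rewrite -abszM cross abszM dvdn_mull.
rewrite Gauss_dvdr; last by rewrite coprime_sym coprime_num_den.
exact: dvdn_trans pd.
Qed.

Lemma p_integral_int (a : int) : p_integral a%:~R.
Proof.
rewrite -[a%:~R]divr1 -[1]/(1%:~R); apply: p_integral_frac.
by rewrite absz1 dvdn1; apply/eqP => p1; move: p_pr; rewrite p1.
Qed.

Lemma p_integralD (x y : rat) :
  p_integral x -> p_integral y -> p_integral (x + y).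
Proof.
rewrite /p_integral => hx hy.
have -> : x + y = (numq x * denq y + numq y * denq x)%:~R / (denq x * denq y)%:~R.
  rewrite -[x in LHS]divq_num_den -[y in LHS]divq_num_den !rmorphD !rmorphM /=.
  by field; rewrite !intr_eq0 !denq_neq0.
by apply: p_integral_frac; rewrite abszM Euclid_dvdM // negb_or hx hy.
Qed.

Lemma p_integral_sum (I : Type) (r : seq I) (P : pred I) (F : I -> rat) :
  (forall i, P i -> p_integral (F i)) -> p_integral (\sum_(i <- r | P i) F i).
Proof.
move=> h; apply: (big_ind p_integral) => //; last exact: p_integralD.
by rewrite -[0]/(0%:~R); apply: p_integral_int.
Qed.

Lemma p_integral_natfrac (a b : nat) : (0 < b)%N -> (p ^ logn p b %| a)%N ->
  p_integral (a%:R / b%:R).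
Proof.
move=> b0 /dvdnP[a' ->]; have [m cm eb] := pfactor_coprime p_pr b0.
have m0 : (0 < m)%N by move: b0; rewrite eb muln_gt0 => /andP[].
have -> : (a' * p ^ logn p b)%:R / b%:R = a'%:R / m%:R :> rat.
  rewrite {2}eb !natrM; field.
  by rewrite !pnatr_eq0 -!lt0n m0 expn_gt0 prime_gt0.
by apply: (@p_integral_frac a' m); rewrite /= -prime_coprime // coprime_sym.
Qed.

Lemma p_integral_cancel_p (A B D : nat) :
  (A%:R : 'F_p) = B%:R -> ~~ (p %| D)%N ->
  p_integral ((A%:R - B%:R) / (p * D)%:R).
Proof.
move=> eAB pD.
have mAB : (A %% p = B %% p)%N by rewrite -!(val_Fp_nat p_pr) eAB.
have p0 : (p%:R : rat) != 0 by rewrite pnatr_eq0 -lt0n prime_gt0.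
have D0 : (D%:R : rat) != 0 by rewrite pnatr_eq0; apply: contraNneq pD => ->.
have -> : (A%:R - B%:R) / (p * D)%:R =
    (((A %/ p)%N : int) - ((B %/ p)%N : int))%:~R / (D : int)%:~R :> rat.
  rewrite [in LHS](divn_eq A p) [in LHS](divn_eq B p) mAB rmorphB /=.
  rewrite !natrD !natrM.
  by field; rewrite p0 D0.
exact: p_integral_frac.
Qed.

End Integrality.

(* Lucas' theorem for one base-p digit, proved through the polynomial identity
   (X + 1)^(p a + b) = (X^p + 1)^a (X + 1)^b, valid in characteristic p. *)
Section Lucas.

Lemma coef_X_add1_exp (R : nzRingType) (n i : nat) :
  (('X + 1 : {poly R}) ^+ n)`_i = 'C(n, i)%:R.
Proof.
elim: n i => [|n IH] [|i]; rewrite ?expr0 ?coef1 ?bin0n //.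
  by rewrite exprSr mulrDr mulr1 coefD coefMX /= add0r IH !bin0.
by rewrite exprSr mulrDr mulr1 coefD coefMX /= !IH binS natrD addrC.
Qed.

Lemma coef_lucas_poly (R : comNzRingType) (p a b c d : nat) :
  (b < p)%N -> (d < p)%N ->
  ((('X ^+ p + 1 : {poly R}) ^+ a * ('X + 1) ^+ b)`_(p * c + d)) =
  ('C(a, c) * 'C(b, d))%:R.
Proof.
move=> bp dp; elim: a c => [|a IH] c.
  rewrite expr0 mul1r coef_X_add1_exp.
  case: c => [|c]; first by rewrite muln0 add0n bin0 mul1n.
  by rewrite bin0n /= mul0n bin_small //; nia.
rewrite exprSr mulrDr mulr1 mulrDl coefD -mulrA mulrCA coefXnM.
case: c => [|c].
  by rewrite muln0 add0n dp /= add0r; have := IH 0%N; rewrite muln0 add0n !bin0.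
have -> : (p * c.+1 + d < p)%N = false by apply/negbTE; nia.
have -> : (p * c.+1 + d - p = p * c + d)%N by nia.
by rewrite !IH binS mulnDl natrD addrC.
Qed.

Variable p : nat.
Hypothesis p_pr : prime p.
Local Notation F := 'F_p.

Lemma lucas (a b c d : nat) : (b < p)%N -> (d < p)%N ->
  ('C(p * a + b, p * c + d)%:R : F) = 'C(a, c)%:R * 'C(b, d)%:R.
Proof.
move=> bp dp; rewrite -natrM -(@coef_lucas_poly _ p) // -coef_X_add1_exp.
have pchar_p : p \in [pchar {poly F}] by rewrite pchar_poly pchar_Fp.
have frobD := pFrobenius_autD_comm pchar_p (commr1 'X).
rewrite !pFrobenius_autE expr1n in frobD.
by rewrite exprD exprM frobD.
Qed.

(* C(p - 1, i) = (-1)^i mod p, from C(p, i) = 0 mod p for 0 < i < p. *)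
Lemma bin_pred_prime (i : nat) : (i < p)%N -> ('C(p.-1, i)%:R : F) = (-1) ^+ i.
Proof.
elim: i => [|i IH] ip; first by rewrite bin0 expr0.
have Cp : ('C(p, i.+1)%:R : F) = 0 by apply: bin_lt_pcharf_0; rewrite ?pchar_Fp.
move: Cp; rewrite -[in 'C(p, _)](prednK (prime_gt0 p_pr)) binS natrD IH;
  last by lia.
by move/eqP; rewrite addr_eq0 => /eqP ->; rewrite exprS mulN1r.
Qed.

End Lucas.

(* The ratio 16^k / C(2k,k)^2 mod p is invariant under k |-> p k + (p-1)/2,
   hence under k |-> p^R k + (p^R-1)/2: this is what links a term of the long
   sum whose denominator is highly divisible by p to a term of the short one. *)
Section CentralBinomialRatio.
Variable p : nat.
Hypothesis p_pr : prime p.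
Hypothesis p_odd : odd p.
Local Notation F := 'F_p.

Lemma fermatF (x : F) : x ^+ p = x.
Proof. by rewrite -{2}(expf_card x) card_Fp. Qed.

Definition ratio16 (k : nat) : F := (16 ^ k)%:R / ('C(2 * k, k) ^ 2)%:R.

Lemma ratio16_step (K : nat) : ratio16 (p * K + (p - 1) %/ 2) = ratio16 K.
Proof.
set h := ((p - 1) %/ 2)%N.
have ph : p = (2 * h + 1)%N by have := odd_double_half p; rewrite p_odd /h; lia.
have four_pow : (4%:R : F) ^+ (p - 1) = 1.
  have n4 : (4%:R : F) != 0.
    rewrite -(dvdn_pcharf (pchar_Fp p_pr)) (_ : 4 = 2 ^ 2)%N //.
    rewrite (Euclid_dvdX _ _ p_pr) // dvdn_prime2 //.
    by apply/negP => /andP[/eqP p2 _]; move: p_odd; rewrite p2.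
  apply: (mulIf n4); rewrite mul1r -exprSr (_ : (p - 1).+1 = p)%N ?fermatF //.
  lia.
have sixteen : (16%:R : F) ^+ h = 1.
  rewrite (_ : 16 = 4 ^ 2)%N // natrX -exprM (_ : (2 * h = p - 1)%N) //; lia.
have bin_h : ('C(p - 1, h)%:R : F) ^+ 2 = 1.
  rewrite (_ : p - 1 = p.-1)%N; last by lia.
  rewrite bin_pred_prime //; last by lia.
  by rewrite -exprM mulnC exprM sqrrN !expr1n.
rewrite /ratio16 (_ : (2 * (p * K + h) = p * (2 * K) + (p - 1))%N); last by lia.
rewrite !natrX lucas // ?exprMn ?bin_h ?mulr1; try lia.
by rewrite exprD mulnC exprM fermatF // sixteen mulr1.
Qed.

Lemma ratio16_iter (R j : nat) :
  ratio16 (p ^ R * j + (p ^ R - 1) %/ 2) = ratio16 j.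
Proof.
elim: R => [|R IH]; first by rewrite expn0 mul1n subnn div0n addn0.
rewrite -IH -[RHS]ratio16_step expnSr half_pred_mul ?oddX ?p_odd ?orbT //.
by congr ratio16; rewrite mulnDr mulnA [(p * p ^ R)%N]mulnC addnA.
Qed.

End CentralBinomialRatio.

Lemma sum_split_mid_class (V : nmodType) (q J : nat) (F : nat -> V) : odd q ->
  \sum_(k < (q * J + (q - 1) %/ 2)%N) F k =
  \sum_(j < J) F (q * j + (q - 1) %/ 2)%N +
  \sum_(k < (q * J + (q - 1) %/ 2)%N | ~~ (q %| 2 * k + 1)%N) F k.
Proof.
move=> oq; set h := ((q - 1) %/ 2)%N; set N := (q * J + h)%N.
have q0 : (0 < q)%N by case: (q) oq.
have hq : (h < q)%N by rewrite /h; have := odd_double_half q; rewrite oq; lia.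
rewrite (bigID (fun k : 'I_N => q %| 2 * k + 1)%N) /=; congr (_ + _).
case: (posnP J) => [J0 | J0].
  rewrite J0 big_ord0 big_pred0 // => k; rewrite dvdn_odd_mid //.
  have kh : (k < h)%N by have := ltn_ord k; rewrite {2}/N J0 muln0.
  by rewrite modn_small ?(ltn_trans kh) // ltn_eqF.
have jN (j : 'I_J) : (q * j + h < N)%N by rewrite /N ltn_add2r ltn_pmul2l.
pose class (k : 'I_N) : 'I_J := insubd (Ordinal J0) (k %/ q)%N.
have divq (j : nat) : ((q * j + h) %/ q = j)%N.
  by rewrite mulnC divnMDl // divn_small // addn0.
rewrite (reindex_onto (fun j => Ordinal (jN j)) class) /=; last first.
  move=> k; rewrite dvdn_odd_mid // => /eqP kh; apply: val_inj => /=.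
  have kJ : (k %/ q < J)%N.
    have := ltn_ord k; rewrite {1}(divn_eq k q) kh /N ltn_add2r.
    by rewrite mulnC ltn_pmul2l.
  by rewrite /class val_insubd kJ {2}(divn_eq k q) kh mulnC.
apply: eq_bigl => j; apply/andP; split.
  by rewrite dvdn_odd_mid // (mulnC q j) modnMDl modn_small.
by apply/eqP/val_inj; rewrite /= /class val_insubd divq ltn_ord.
Qed.

Section Terms.
Variables p s : nat.
Hypothesis p_pr : prime p.
Hypothesis p_odd : odd p.
Let q : nat := (p ^ s.+1)%N.

(* Unpaired terms: v_p((2k+1)^3 C(2k,k)^2) <= (2k+1)'s valuation plus
   twice the bound s + 1 of logn_odd_central_binomial, i.e. <= 3s + 2. *)
Lemma p_integral_unpaired_term (k : nat) :
  (2 * k + 1 < p ^ s.+2)%N -> ~~ (q %| 2 * k + 1)%N ->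
  p_integral p ((p ^ (3 * s + 2))%:R * term k).
Proof.
move=> kR kq; have := logn_odd_central_binomial p_pr kR.
set e := logn p (2 * k + 1); set c := logn p 'C(2 * k, k) => /= ec.
have es : (e <= s)%N.
  rewrite leqNgt; apply: contra kq => se.
  by apply: dvdn_trans (pfactor_dvdnn p (2 * k + 1)); rewrite dvdn_exp2l.
have C0 : (0 < 'C(2 * k, k))%N by rewrite bin_gt0; lia.
rewrite /term mulrA -natrM -natrM; apply: p_integral_natfrac => //.
  by rewrite muln_gt0 !expn_gt0 C0 addn1.
apply: dvdn_mulr; rewrite dvdn_exp2l // lognM ?expn_gt0 ?C0 ?addn1 // !lognX.
by move: ec es; rewrite /e /c addn1; lia.
Qed.

(* The rescaled paired term is  16^k / (p m^3 C(2k,k)^2)  with m = 2j + 1,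
   and its difference with term j / p has a numerator divisible by p since
   16^k / C(2k,k)^2 = 16^j / C(2j,j)^2 mod p (ratio16_iter). *)
Lemma p_integral_paired_term (j : nat) : (j < (p - 1) %/ 2)%N ->
  p_integral p ((p ^ (3 * s + 2))%:R * term (q * j + (q - 1) %/ 2)
                - term j / p%:R).
Proof.
move=> jJ; set k := (q * j + (q - 1) %/ 2)%N; set m := (2 * j + 1)%N.
have p0 : (0 < p)%N := prime_gt0 p_pr.
have oq : odd q by rewrite oddX p_odd orbT.
have ekm : (2 * k + 1 = q * m)%N.
  by rewrite /k /m; have := odd_double_half q; rewrite oq; nia.
have mp : (m < p ^ 1)%N by rewrite expn1 /m; lia.
have kR : (2 * k + 1 < p ^ s.+2)%N by rewrite ekm expnSr ltn_pmul2l ?expn_gt0 ?p0.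
have := logn_odd_central_binomial p_pr mp; rewrite -/m /= => vj.
have := logn_odd_central_binomial p_pr kR.
have m0 : (0 < m)%N by rewrite /m addn1.
rewrite ekm lognM ?expn_gt0 ?p0 // /q pfactorK // => vk.
have Cj0 : (0 < 'C(2 * j, j))%N by rewrite bin_gt0; lia.
have Ck0 : (0 < 'C(2 * k, k))%N by rewrite bin_gt0; lia.
have pm : ~~ (p %| m)%N by apply: ndvdn_logn0 => //; lia.
have pCj : ~~ (p %| 'C(2 * j, j))%N by apply: ndvdn_logn0 => //; lia.
have pCk : ~~ (p %| 'C(2 * k, k))%N by apply: ndvdn_logn0 => //; lia.
have nzF (x : nat) : ~~ (p %| x)%N -> ((x ^ 2)%:R : 'F_p) != 0.
  move=> px; rewrite -(dvdn_pcharf (pchar_Fp p_pr)).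
  by rewrite (Euclid_dvdX _ _ p_pr) andbT.
have ratio_eq :
    ((16 ^ k * 'C(2 * j, j) ^ 2)%:R : 'F_p) = (16 ^ j * 'C(2 * k, k) ^ 2)%:R.
  have := ratio16_iter p_pr p_odd s.+1 j; rewrite /ratio16 -/q -/k => e.
  rewrite (natrM _ (16 ^ k)) (natrM _ (16 ^ j)).
  by rewrite -[(16 ^ k)%:R](divfK (nzF _ pCk)) e mulrAC divfK ?nzF.
have -> : (p ^ (3 * s + 2))%:R * term k - term j / p%:R =
    ((16 ^ k * 'C(2 * j, j) ^ 2)%:R - (16 ^ j * 'C(2 * k, k) ^ 2)%:R) /
    (p * (m ^ 3 * 'C(2 * k, k) ^ 2 * 'C(2 * j, j) ^ 2))%:R :> rat.
  have eq3 : (q ^ 3 = p ^ (3 * s + 2) * p)%N.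
    by rewrite -!expnM -expnSr; congr expn; lia.
  rewrite /term ekm expnMn eq3 -/m !natrM !natrX.
  have nz (x : nat) : (0 < x)%N -> (x%:R : rat) != 0.
    by move=> x0; rewrite pnatr_eq0 -lt0n.
  by field; rewrite expf_neq0 !nz.
apply: p_integral_cancel_p => //.
by rewrite !Euclid_dvdM ?Euclid_dvdX // (negbTE pm) (negbTE pCk) (negbTE pCj).
Qed.

End Terms.

Unset Implicit Arguments.

Theorem lemma3p2 (p r : nat) : prime p -> odd p -> (0 < r)%N ->
  rat_congr p 4 ((p ^ (3 * r))%:R * S (p ^ r)) ((p ^ 3)%:R * S p).
Proof.
move=> p_pr p_odd; case: r => [//|[|s] _].
  by rewrite rat_congrE muln1 expn1 subrr mul0r; apply: (p_integral_int p_pr 0).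
set q := (p ^ s.+1)%N; set J := ((p - 1) %/ 2)%N.
set N := (q * J + (q - 1) %/ 2)%N.
have oq : odd q by rewrite oddX p_odd orbT.
have eN : ((p ^ s.+2 - 1) %/ 2 = N)%N by rewrite expnS half_pred_mul.
rewrite rat_congrE.
have -> : ((p ^ (3 * s.+2))%:R * S (p ^ s.+2) - (p ^ 3)%:R * S p) / (p ^ 4)%:R =
    \sum_(k < N) (p ^ (3 * s + 2))%:R * term k - \sum_(j < J) term j / p%:R.
  rewrite /S eN -/J -mulr_sumr -mulr_suml (_ : 3 * s.+2 = 3 * s + 2 + 4)%N;
    last by lia.
  by rewrite expnD !natrM !natrX; field; rewrite pnatr_eq0 -lt0n prime_gt0.
rewrite /N (sum_split_mid_class _ (fun k => (p ^ (3 * s + 2))%:R * term k)) //.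
rewrite addrAC -sumrB.
apply: (p_integralD p_pr); apply: (p_integral_sum p_pr).
  by move=> j _; apply: p_integral_paired_term.
move=> k kq; apply: p_integral_unpaired_term => //.
have kN : (k < (p ^ s.+2 - 1) %/ 2)%N by rewrite eN ltn_ord.
by have := odd_double_half (p ^ s.+2); rewrite oddX p_odd orbT; lia.
Qed.
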